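(* Let $\varphi\colon V \to \left( F(r_L, r_Lr_P) \right)^{r_P}$ be the map sending $L \in V$ to $F_{\alpha_1}(L, r_Lr_P) \oplus \ldots \oplus F_{\alpha_{r_P}}(L, r_Lr_P)$. Then $\varphi$ is a surjective map of algebraic sets, and all fibers of $\varphi$ have the same dimension.
   Context: Let $C$ be a field of characteristic zero with algebraic closure $\bar C$, and $\partial x = x\partial+1$. Fix $P\in C[x,y]$ with $r_P=\deg_y P>1$ such that $P(0,y)$ is squarefree of degree $r_P$, and let $g_1,\ldots,g_{r_P}\in\bar C[[x]]$ be the power series roots of $P(x,y)=0$ at zero, with $\alpha_i = g_i(0)$ (these are distinct). Let $d_L\geq (r_Lr_P - r_L + 1)r_P$, and let $V$ be the set of all $L\in\bar C[x][\partial]$ of order $r_L$ and degree at most $d_L$ whose leading coefficient $\operatorname{lc}_\partial(L)$ does not vanish at $\alpha_1,\ldots,\alpha_{r_P}$. For an operator $L$ of order $r$ whose leading coefficient does not vanish at $\alpha$, and $d_1\geq r$, the fundamental matrix of degree $d_1$ at $\alpha$, $F_\alpha(L,d_1)$, is the $r\times(d_1+1)$ matrix whose first $r$ columns form the identity matrix $I_r$ and each of whose rows consists of the first $d_1+1$ coefficients (in powers of $x-\alpha$) of some power series solution of $L$ at $x=\alpha$. $F(r,d)$ denotes the space of all possible fundamental matrices of degree $d$ for operators of order $r$; it is isomorphic to the affine space $\mathbb{A}^{r(d+1-r)}$. *)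

From HB Require Import structures.
From mathcomp Require Import all_boot all_order all_algebra.
From mathcomp Require Import mpoly.
From Stdlib Require Import ClassicalEpsilon.
Set Implicit Arguments. Unset Strict Implicit. Unset Printing Implicit Defensive.
Import Order.TTheory GRing.Theory.
Local Open Scope ring_scope.

(* P(0,y) for P in C[x][y], encoded as {poly {poly C}} : coefficients in y
   are polynomials in x. *)
Definition P_at0 (C : fieldType) (P : {poly {poly C}}) : {poly C} :=
  map_poly (fun c : {poly C} => c.[0]) P.

Definition squarefree (C : fieldType) (p : {poly C}) : Prop :=
  forall q : {poly C}, q * q %| p -> (size q <= 1)%N.

Section Ops.
Variable K : fieldType.

(* An operator L = \sum_{j <= r} c_j(x) d^j in K[x][d] (with d x = x d + 1)
   of order (at most) r and degree at most d in x is encoded by its matrix of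
   coefficients A : 'M_(r.+1, d.+1), A j i = coefficient of x^i in c_j. *)
Definition opcoef r d (A : 'M[K]_(r.+1, d.+1)) (j : 'I_r.+1) : {poly K} :=
  \poly_(i < d.+1) A j (inord i).

Definition oplc r d (A : 'M[K]_(r.+1, d.+1)) : {poly K} := opcoef A ord_max.

(* Formal power series at x = alpha: f = \sum_k f k (x - alpha)^k.
   Coefficient of (x-alpha)^k in L f, where d acts as d/dx. *)
Definition ser_apply r d (A : 'M[K]_(r.+1, d.+1)) (alpha : K) (f : nat -> K)
    (k : nat) : K :=
  \sum_(j < r.+1) \sum_(i < k.+1)
     ((opcoef A j) \Po ('X + alpha%:P))`_i
       * ((k - i + j) ^_ j)%:R * f (k - i + j)%N.

Definition is_ps_solution r d (A : 'M[K]_(r.+1, d.+1)) (alpha : K)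
    (f : nat -> K) : Prop :=
  forall k, ser_apply A alpha f k = 0.

Definition is_fund_mat r d (A : 'M[K]_(r.+1, d.+1)) (alpha : K) (d1 : nat)
    (M : 'M[K]_(r, d1.+1)) : Prop :=
  (forall (i : 'I_r) (j : 'I_d1.+1), (j < r)%N -> M i j = (i == j :> nat)%:R)
  /\ (forall i : 'I_r, exists f : nat -> K,
        is_ps_solution A alpha f /\ forall j : 'I_d1.+1, M i j = f j).

Definition fund_mat r d (A : 'M[K]_(r.+1, d.+1)) (alpha : K) (d1 : nat)
  : 'M[K]_(r, d1.+1) :=
  epsilon (inhabits 0) (@is_fund_mat r d A alpha d1).

Definition Fspace r d1 (M : 'M[K]_(r, d1.+1)) : Prop :=
  forall (i : 'I_r) (j : 'I_d1.+1), (j < r)%N -> M i j = (i == j :> nat)%:R.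

Definition coords r d (A : 'M[K]_(r.+1, d.+1)) : 'I_(r.+1 * d.+1) -> K :=
  fun k => mxvec A 0 k.

(* Dimension of a subset S of affine n-space K^n (dimension of its Zariski
   closure = transcendence degree of its coordinate ring): the maximal number
   of coordinate functions that are algebraically independent on S. *)
Definition coord_indep n (S : ('I_n -> K) -> Prop) e (s : 'I_e -> 'I_n) :=
  forall p : {mpoly K[e]},
    (forall v, S v -> p.@[fun j => v (s j)] = 0) -> p = 0.

Definition has_dim n (S : ('I_n -> K) -> Prop) (dim : nat) : Prop :=
  (exists s : 'I_dim -> 'I_n, injective s /\ coord_indep S s)
  /\ (forall e (s : 'I_e -> 'I_n), injective s -> coord_indep S s ->
        (e <= dim)%N).
End Ops.

(* At a point alpha with lc_d(L)(alpha) <> 0, the equation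
   L f = 0 expresses each coefficient f_(k+r) of a power series solution
   through the earlier ones, dividing by lc_d(L)(alpha); so the entries of
   F_alpha(L, d1) are rational functions of the coefficients of L, regular on
   V.  With N = r_L r_P - r_L + 1, the condition F_(alpha_i)(L, r_L r_P) = M_i
   says that L kills the rows of M_i up to order N at alpha_i.  This is linear
   in L and, for a given leading coefficient, triangular in the first N Taylor
   coefficients at alpha_i of c_0, ..., c_(r_L - 1); by Hermite interpolation
   (d_L >= N r_P) it fixes these c_j modulo prod_i (x - alpha_i)^N and leaves
   the leading coefficient and all monomials of degree >= N r_P free.  Every
   fiber is thus a nonempty Zariski-open part of a linear space whose
   dimension, the number of free coefficients, does not depend on M. *)

From HB Require Import structures.
From mathcomp Require Import all_boot all_order all_algebra.
From mathcomp Require Import mpoly.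
From mathcomp Require Import zify ring.
From Stdlib Require Import ClassicalEpsilon.
Import GRing.Theory.
Local Open Scope ring_scope.

Set Implicit Arguments. Unset Strict Implicit. Unset Printing Implicit Defensive.

Lemma digits_inj B n (a b : 'I_n -> nat) :
  (forall i, a i < B)%N -> (forall i, b i < B)%N ->
  (\sum_(i < n) a i * B ^ i = \sum_(i < n) b i * B ^ i)%N -> a =1 b.
Proof.
elim: n a b => [|n IH] a b ha hb e i; first by case: i.
have B_gt0 : (0 < B)%N by have := ha ord0; lia.
have shift (c : 'I_n.+1 -> nat) : (\sum_(i < n.+1) c i * B ^ i =
    c ord0 + (\sum_(i < n) c (lift ord0 i) * B ^ i) * B)%N.
  rewrite big_ord_recl expn0 muln1 big_distrl /=; congr (_ + _)%N.
  by apply: eq_bigr => j _; rewrite /bump /= add1n expnS; lia.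
move: e; rewrite !shift => e.
have e0 : a ord0 = b ord0.
  have := congr1 (modn^~ B) e.
  by rewrite /= ![(_ + _ * B)%N]addnC !modnMDl !modn_small.
have e1 : (\sum_(i < n) a (lift ord0 i) * B ^ i =
           \sum_(i < n) b (lift ord0 i) * B ^ i)%N.
  have := congr1 (divn^~ B) e.
  by rewrite /= ![(_ + _ * B)%N]addnC !divnMDl // !divn_small // !addn0.
have := IH _ _ (fun i => ha (lift ord0 i)) (fun i => hb (lift ord0 i)) e1.
by case: (unliftP ord0 i) => [j ->|->] // h; exact: h.
Qed.

Section LinearForms.
Variable K : fieldType.

Lemma wide_mx_left_kernel m n (X : 'M[K]_(n, m)) :
  (m < n)%N -> exists2 v : 'rV_n, v != 0 & v *m X = 0.
Proof.
move=> lt_mn; have /rowV0Pn[v /sub_kermxP vX0 nz_v] : kermx X != 0.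
  by rewrite kermx_eq0 /row_free ltn_eqF // (leq_ltn_trans (rank_leq_col X)).
by exists v.
Qed.

Lemma linear_mpoly_eq0 n (v : 'rV[K]_n) :
  \sum_(u < n) v 0 u *: 'X_u = 0 :> {mpoly K[n]} -> v = 0.
Proof.
move=> p0; apply/rowP => u; have := congr1 (mcoeff U_(u)) p0.
rewrite mcoeff0 raddf_sum (bigD1 u) //= big1 => [|u' ne_u'u].
  by rewrite mcoeffZ mcoeffXU eqxx mulr1 addr0 mxE.
by rewrite mcoeffZ mcoeffXU (negbTE ne_u'u) mulr0.
Qed.

End LinearForms.

Section CharZero.
Variable K : fieldType.
Hypothesis charK0 : [pchar K] =i pred0.

Lemma natf_eq0 n : (n%:R == 0 :> K) = (n == 0)%N.
Proof. by have /pcharf0P := charK0; apply. Qed.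

Lemma ffact_natf_neq0 n m : (m <= n)%N -> ((n ^_ m)%:R : K) != 0.
Proof. by move=> le_mn; rewrite natf_eq0 -lt0n ffact_gt0. Qed.

Lemma fact_natf_neq0 n : ((n`!)%:R : K) != 0.
Proof. by rewrite natf_eq0 -lt0n fact_gt0. Qed.

Lemma natf_inj : injective (fun n : nat => (n%:R : K)).
Proof.
move=> m n /= e_mn; wlog le_mn : m n e_mn / (m <= n)%N.
  by move=> wlog_le; case: (leqP m n) => [|/ltnW] /wlog_le ->.
have /eqP : ((n - m)%:R : K) = 0 by rewrite natrB // e_mn subrr.
by rewrite natf_eq0 subn_eq0 => le_nm; apply/eqP; rewrite eqn_leq le_mn.
Qed.

Lemma vanishing_poly_eq0 (g : {poly K}) : (forall x, g.[x] = 0) -> g = 0.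
Proof.
move=> g0; apply/eqP; apply: contraT => nz_g.
have := max_poly_roots nz_g (rs := [seq i%:R | i <- iota 0 (size g)]).
rewrite size_map size_iota ltnn; apply; first by apply/allP => x _; apply/eqP.
by rewrite map_inj_uniq ?iota_uniq //; apply: natf_inj.
Qed.

(* Kronecker substitution x_i := x ^ (B ^ i), with B bounding all exponents,
   maps distinct monomials of [p] to distinct powers of x. *)
Lemma vanishing_mpoly_eq0 n (p : {mpoly K[n]}) :
  (forall v : 'I_n -> K, p.@[v] = 0) -> p = 0.
Proof.
move=> p0; set B := msize p.
pose kron (m : 'X_{1..n}) := (\sum_(i < n) m i * B ^ i)%N.
pose g : {poly K} := \sum_(m <- msupp p) p@_m *: 'X^(kron m).
have g0 : g = 0.
  apply: vanishing_poly_eq0 => x; rewrite -(p0 (fun i => x ^+ (B ^ i))) mevalE.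
  rewrite horner_sum; apply: eq_bigr => m _; rewrite hornerZ hornerXn.
  rewrite /kron -prodrXr; congr (_ * _); apply: eq_bigr => i _.
  by rewrite -exprM mulnC.
have exp_lt m i : m \in msupp p -> (m i < B)%N.
  move=> /msize_mdeg_lt; apply: leq_ltn_trans.
  by rewrite mdegE (bigD1 i) //= leq_addr.
have kron_inj : {in msupp p &, injective kron}.
  move=> m1 m2 m1p m2p e; apply/mnmP.
  by apply: (digits_inj (B := B)) e => i; apply: exp_lt.
apply/mpolyP => m; rewrite mcoeff0.
have [mp|] := boolP (m \in msupp p); last by rewrite mcoeff_msupp negbK => /eqP.
have := congr1 (fun q : {poly K} => q`_(kron m)) g0.
rewrite /= coef0 coef_sum (bigD1_seq m) ?msupp_uniq //= coefZ coefXn eqxx mulr1.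
rewrite big1_seq ?addr0 // => m' /andP[ne_m'm m'p].
rewrite coefZ coefXn; case: eqP => [e|]; last by rewrite mulr0.
by rewrite (kron_inj _ _ m'p mp (esym e)) eqxx in ne_m'm.
Qed.

End CharZero.

Section Hermite.
Variable K : fieldType.

Lemma taylor_coef0_dvdp (p : {poly K}) (a : K) N :
  (forall k, (k < N)%N -> (p \Po ('X + a%:P))`_k = 0) -> ('X - a%:P) ^+ N %| p.
Proof.
move=> low0; set q := p \Po ('X + a%:P).
have q_eq : q = drop_poly N q * 'X^N.
  rewrite -[LHS](poly_take_drop N q) [take_poly N q](_ : _ = 0) ?add0r //.
  by apply/polyP => i; rewrite coef_take_poly coef0; case: ifP => // /low0.
rewrite -(comp_polyXaddC_K p a) -/q q_eq comp_polyM comp_Xn_poly.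
exact: dvdp_mull (dvdpp _).
Qed.

Lemma prod_XsubC_exp_dvdp (s : seq K) N (p : {poly K}) : uniq s ->
  (forall a, a \in s -> ('X - a%:P) ^+ N %| p) ->
  \prod_(a <- s) ('X - a%:P) ^+ N %| p.
Proof.
elim: s p => [|a s IH] p /=; first by rewrite big_nil dvd1p.
move=> /andP[a_notin_s uniq_s] dvd_p; rewrite big_cons Gauss_dvdp.
  rewrite dvd_p ?mem_head //=; apply: IH => // b b_in_s.
  by apply: dvd_p; rewrite in_cons b_in_s orbT.
apply: coprimep_expl; rewrite coprimep_sym coprimep_XsubC /root horner_prod.
rewrite prodf_seq_neq0; apply/allP => b b_in_s /=.
rewrite horner_exp !hornerE expf_neq0 // subr_eq0; apply: contraNneq a_notin_s.
by move=> ->.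
Qed.

Lemma size_prod_XsubC_exp (s : seq K) N :
  size (\prod_(a <- s) ('X - a%:P) ^+ N) = (N * size s).+1.
Proof.
elim: s => [|a s IH]; first by rewrite big_nil size_poly1 muln0.
have monic_prod (s' : seq K) : \prod_(b <- s') ('X - b%:P) ^+ N \is monic.
  by apply: monic_prod => b _; apply/monic_exp/monicXsubC.
rewrite big_cons size_monicM ?monic_exp ?monicXsubC ?monic_neq0 //.
by rewrite size_exp_XsubC IH /=; lia.
Qed.

Lemma hermite_uniq (s : seq K) N (p : {poly K}) :
  uniq s -> (size p <= N * size s)%N ->
  (forall a, a \in s -> forall k, (k < N)%N -> (p \Po ('X + a%:P))`_k = 0) ->
  p = 0.
Proof.
move=> uniq_s size_p jets0; apply/eqP; apply: contraTT size_p => nz_p.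
have dvd_p := prod_XsubC_exp_dvdp uniq_s (fun a sa => taylor_coef0_dvdp (jets0 a sa)).
by have := dvdp_leq nz_p dvd_p; rewrite size_prod_XsubC_exp -ltnNge.
Qed.

Definition poly_of_row n (v : 'rV[K]_n) : {poly K} := \sum_(j < n) v 0 j *: 'X^j.

Lemma size_poly_of_row n (v : 'rV[K]_n) : (size (poly_of_row v) <= n)%N.
Proof.
apply/leq_sizeP => j le_nj; rewrite coef_sum big1 // => i _.
by rewrite coefZ coefXn; case: eqP => [ji|]; rewrite ?mulr0 //; have := ltn_ord i; lia.
Qed.

Lemma coef_poly_of_row n (v : 'rV[K]_n) (j : 'I_n) : (poly_of_row v)`_j = v 0 j.
Proof.
rewrite coef_sum (bigD1 j) //= coefZ coefXn eqxx mulr1 big1 ?addr0 // => i ne_ij.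
rewrite coefZ coefXn eq_sym; case: eqP => [/val_inj e_ij|]; last by rewrite mulr0.
by rewrite e_ij eqxx in ne_ij.
Qed.

Lemma coef_comp_poly_of_row n (v : 'rV[K]_n) (q : {poly K}) k :
  (poly_of_row v \Po q)`_k = \sum_(j < n) v 0 j * (q ^+ j)`_k.
Proof.
rewrite /poly_of_row (big_morph _ (fun p1 p2 => comp_polyD p1 p2 q) (comp_poly0 q)).
rewrite coef_sum; apply: eq_bigr => j _.
by rewrite comp_polyZ comp_Xn_poly coefZ.
Qed.

(* The linear map sending p to its N-jets at the m points is injective by
   [hermite_uniq], hence bijective on polynomials of size at most N * m. *)
Lemma hermite_interpolation m N (alpha : 'I_m -> K) (w : 'I_m -> nat -> K) :
  injective alpha ->
  exists2 p : {poly K}, (size p <= N * m)%N &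
    forall i k, (k < N)%N -> (p \Po ('X + (alpha i)%:P))`_k = w i k.
Proof.
move=> alpha_inj.
pose pos (o : 'I_(m * N)) : 'I_m * 'I_N :=
  enum_val (cast_ord (esym (mxvec_cast m N)) o).
have posE i k : pos (mxvec_index i k) = (i, k) by rewrite /pos cast_ordK enum_rankK.
pose jet : 'M[K]_(m * N) :=
  \matrix_(j, o) ((('X + (alpha (pos o).1)%:P) ^+ j)`_(pos o).2).
have jetE (v : 'rV_(m * N)) i (k : 'I_N) :
    (v *m jet) 0 (mxvec_index i k) = (poly_of_row v \Po ('X + (alpha i)%:P))`_k.
  by rewrite coef_comp_poly_of_row mxE; apply: eq_bigr => j _; rewrite mxE posE.
have jet_unit : jet \in unitmx.
  rewrite -row_free_unit; apply: inj_row_free => v v_jet0.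
  have p0 : poly_of_row v = 0.
    apply: (@hermite_uniq [seq alpha i | i <- enum 'I_m] N).
    - by rewrite map_inj_uniq ?enum_uniq.
    - by rewrite size_map size_enum_ord (leq_trans (size_poly_of_row v)) // mulnC.
    move=> _ /mapP[i _ ->] k lt_kN.
    by rewrite -[k]/(val (Ordinal lt_kN)) -jetE v_jet0 mxE.
  by apply/rowP => j; rewrite mxE -coef_poly_of_row p0 coef0.
pose wv : 'rV_(m * N) := \row_o w (pos o).1 (pos o).2.
exists (poly_of_row (wv *m invmx jet)).
  by rewrite (leq_trans (size_poly_of_row _)) // mulnC.
move=> i k lt_kN.
by rewrite -[k]/(val (Ordinal lt_kN)) -jetE mulmxKV // mxE posE.
Qed.

End Hermite.

Section SeriesCoefficients.
Variables (K : fieldType) (r d : nat).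
Implicit Types (A B : 'M[K]_(r.+1, d.+1)) (tau : 'I_r.+1 -> nat -> K).

Definition taylor_coef A (a : K) (j : 'I_r.+1) (i : nat) : K :=
  ((opcoef A j) \Po ('X + a%:P))`_i.

Definition series_coef tau (f : nat -> K) (k : nat) : K :=
  \sum_(j < r.+1) \sum_(i < k.+1)
     tau j i * ((k - i + j) ^_ j)%:R * f (k - i + j)%N.

Lemma ser_applyE A a f k : ser_apply A a f k = series_coef (taylor_coef A a) f k.
Proof. by []. Qed.

Lemma coef_opcoef A j (m : 'I_d.+1) : (opcoef A j)`_m = A j m.
Proof. by rewrite coef_poly ltn_ord inord_val. Qed.

Lemma horner_oplc A x : (oplc A).[x] = \sum_(m < d.+1) A ord_max m * x ^+ m.
Proof.
rewrite /oplc /opcoef poly_def horner_sum; apply: eq_bigr => m _.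
by rewrite hornerZ hornerXn inord_val.
Qed.

Lemma coords_sum (I : finType) (c : I -> K) (F : I -> 'M[K]_(r.+1, d.+1)) k :
  coords (\sum_t c t *: F t) k = \sum_t c t * coords (F t) k.
Proof.
case/mxvec_indexP: k => j m; rewrite /coords !mxvecE summxE.
by apply: eq_bigr => t _; rewrite mxE mxvecE.
Qed.

Lemma taylor_coefE A a j i :
  taylor_coef A a j i = \sum_(m < d.+1) A j m * (('X + a%:P) ^+ m)`_i.
Proof.
rewrite /taylor_coef /opcoef poly_def.
rewrite (big_morph _ (fun p q => comp_polyD p q _) (comp_poly0 _)) coef_sum.
by apply: eq_bigr => m _; rewrite comp_polyZ comp_Xn_poly coefZ inord_val.
Qed.

Lemma taylor_coef_lc A a : taylor_coef A a ord_max 0 = (oplc A).[a].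
Proof. by rewrite /taylor_coef -horner_coef0 horner_comp !hornerE. Qed.

Lemma series_coef_ext tau tau' f k :
  (forall j i, (i <= k)%N -> tau j i = tau' j i) ->
  series_coef tau f k = series_coef tau' f k.
Proof.
by move=> e; apply: eq_bigr => j _; apply: eq_bigr => i _; rewrite e // -ltnS.
Qed.

(* Only the term [i = 0, j = r] sees the value [f (k + r)]. *)
Lemma series_coef_top tau f g k : (forall m, (m < k + r)%N -> f m = g m) ->
  series_coef tau f k = series_coef tau g k
     + tau ord_max 0%N * ((k + r) ^_ r)%:R * (f (k + r)%N - g (k + r)%N).
Proof.
move=> e_fg; rewrite -[LHS](subrK (series_coef tau g k)) addrC; congr (_ + _).
rewrite /series_coef -sumrB big_ord_recr /= big1 => [|j _]; last first.
  rewrite -sumrB big1 // => i _; rewrite e_fg ?subrr //.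
  by have := ltn_ord j; have := ltn_ord i; lia.
rewrite add0r -sumrB big_ord_recl /= big1 => [|i _].
  by rewrite addr0 subn0 -mulrBr.
by rewrite e_fg ?subrr //; have := ltn_ord i; rewrite /bump /=; lia.
Qed.

Lemma ser_apply_ext A a f g k : (forall m, (m <= k + r)%N -> f m = g m) ->
  ser_apply A a f k = ser_apply A a g k.
Proof.
move=> e_fg; rewrite !ser_applyE (@series_coef_top _ _ g); last first.
  by move=> m lt_m; apply: e_fg; apply: ltnW.
by rewrite e_fg // subrr mulr0 addr0.
Qed.

Lemma ser_apply0 a f k : ser_apply (0 : 'M[K]_(r.+1, d.+1)) a f k = 0.
Proof.
rewrite ser_applyE /series_coef big1 // => j _; rewrite big1 // => i _.
by rewrite taylor_coefE big1 ?mul0r // => m _; rewrite mxE mul0r.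
Qed.

Lemma taylor_coef_lin c A B a j i :
  taylor_coef (c *: A + B) a j i = c * taylor_coef A a j i + taylor_coef B a j i.
Proof.
rewrite !taylor_coefE big_distrr -big_split; apply: eq_bigr => m _.
by rewrite /= !mxE mulrDl mulrA.
Qed.

Lemma ser_apply_lin c A B a f k :
  ser_apply (c *: A + B) a f k = c * ser_apply A a f k + ser_apply B a f k.
Proof.
rewrite !ser_applyE /series_coef big_distrr -big_split; apply: eq_bigr => j _.
rewrite big_distrr -big_split; apply: eq_bigr => i _.
by rewrite /= taylor_coef_lin !mulrDl !mulrA.
Qed.

End SeriesCoefficients.

Section PowerSeriesSolutions.
Variables (K : fieldType) (r d : nat).
Hypothesis charK0 : [pchar K] =i pred0.
Variables (A : 'M[K]_(r.+1, d.+1)) (a : K).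

(* [series_sol_upto init n] agrees with [init] below [r] and makes the first
   [n] coefficients of [L f] vanish, by solving for [f (n + r)] at step [n]. *)
Fixpoint series_sol_upto (init : nat -> K) n : nat -> K :=
  match n with
  | 0 => fun m => if (m < r)%N then init m else 0
  | n'.+1 => let f := series_sol_upto init n' in
      fun m => if m == (n' + r)%N then
                 f m - ser_apply A a f n' / ((oplc A).[a] * ((n' + r) ^_ r)%:R)
               else f m
  end.

Definition series_sol init m := series_sol_upto init m.+1 m.

Lemma series_sol_upto_stable init n n' m : (n <= n')%N -> (m < n + r)%N ->
  series_sol_upto init n' m = series_sol_upto init n m.
Proof.
move=> /subnK <- lt_m; elim: (n' - n)%N => //= k IH.
by rewrite ifN ?IH //; apply/negP => /eqP; lia.
Qed.

Lemma series_sol_init init m : (m < r)%N -> series_sol init m = init m.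
Proof. by move=> lt_mr; rewrite /series_sol (@series_sol_upto_stable _ 0) //= lt_mr. Qed.

Lemma series_solE init k m : (m <= k + r)%N ->
  series_sol init m = series_sol_upto init k.+1 m.
Proof.
move=> le_m; rewrite /series_sol; case: (leqP m k) => le_mk.
  by rewrite (@series_sol_upto_stable _ m.+1 k.+1) //; lia.
by rewrite (@series_sol_upto_stable _ k.+1 m.+1) //; lia.
Qed.

Hypothesis lcA : (oplc A).[a] != 0.

Lemma series_sol_upto_step init n :
  ser_apply A a (series_sol_upto init n.+1) n = 0.
Proof.
rewrite ser_applyE (@series_coef_top _ _ _ _ (series_sol_upto init n)); last first.
  by move=> m lt_m /=; rewrite ifN //; apply/negP => /eqP; lia.
rewrite /= eqxx taylor_coef_lc -ser_applyE addrAC subrr add0r mulrN mulrA.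
have nz_c := ffact_natf_neq0 charK0 (leq_addl n r).
by rewrite [_ * ser_apply _ _ _ _]mulrC -mulrA divff ?mulf_neq0 // mulr1 subrr.
Qed.

Lemma series_solP init : is_ps_solution A a (series_sol init).
Proof.
move=> k; rewrite ser_applyE (@series_coef_top _ _ _ _ (series_sol_upto init k.+1)).
  by rewrite (@series_solE _ k) // subrr mulr0 addr0 -ser_applyE series_sol_upto_step.
by move=> m lt_m; rewrite (@series_solE _ k) //; lia.
Qed.

Lemma ps_solution_unique f g N :
  (forall k, (k < N)%N -> ser_apply A a f k = 0) ->
  (forall k, (k < N)%N -> ser_apply A a g k = 0) ->
  (forall m, (m < r)%N -> f m = g m) ->
  forall m, (m < N + r)%N -> f m = g m.
Proof.
move=> f_sol g_sol e_init.
suff e_upto n : (n <= N)%N -> forall m, (m < n + r)%N -> f m = g m by apply: e_upto.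
elim: n => [|n IH] le_nN m lt_m; first exact: e_init.
case: (ltnP m (n + r)) => [|le_m]; first by apply: IH; lia.
have -> : m = (n + r)%N by lia.
have := f_sol n le_nN; rewrite ser_applyE (@series_coef_top _ _ _ _ g); last first.
  by move=> m' lt_m'; apply: IH => //; lia.
rewrite -ser_applyE g_sol // add0r taylor_coef_lc => /eqP.
rewrite !mulf_eq0 (negbTE lcA) (negbTE (ffact_natf_neq0 charK0 (leq_addl n r))).
by rewrite subr_eq0 => /eqP.
Qed.

Lemma fund_matP d1 : is_fund_mat A a (fund_mat A a d1).
Proof.
apply: epsilon_spec.
exists (\matrix_(i < r, j < d1.+1) series_sol (fun m => (i == m :> nat)%:R) j).
split=> [i j lt_jr|i]; first by rewrite mxE series_sol_init.
exists (series_sol (fun m => (i == m :> nat)%:R)); split; first exact: series_solP.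
by move=> j; rewrite mxE.
Qed.

Lemma fund_mat_series_sol d1 (i : 'I_r) (j : 'I_d1.+1) : (r <= d1.+1)%N ->
  fund_mat A a d1 i j = series_sol (fun m => (i == m :> nat)%:R) j.
Proof.
move=> le_r_d1; have [fund_init fund_rows] := fund_matP d1.
have [f [f_sol fE]] := fund_rows i; rewrite fE.
apply: (@ps_solution_unique _ _ j.+1) => //; last by lia.
- by move=> k _; apply: series_solP.
- move=> m lt_mr; rewrite series_sol_init //.
  have lt_m : (m < d1.+1)%N by lia.
  by rewrite -(fE (Ordinal lt_m)) fund_init.
Qed.

End PowerSeriesSolutions.

Section Rationality.
Variables (K : fieldType) (r d : nat).
Local Notation MT := 'M[K]_(r.+1, d.+1).
Local Notation coord_poly := {mpoly K[r.+1 * d.+1]}.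

Definition is_polyfun (h : MT -> K) :=
  exists p : coord_poly, forall A, h A = p.@[coords A].

Lemma polyfun_const c : is_polyfun (fun _ => c).
Proof. by exists c%:MP => A; rewrite mevalC. Qed.

Lemma polyfun_entry j m : is_polyfun (fun A => A j m).
Proof. by exists 'X_(mxvec_index j m) => A; rewrite mevalXU /coords mxvecE. Qed.

Lemma polyfunM h1 h2 :
  is_polyfun h1 -> is_polyfun h2 -> is_polyfun (fun A => h1 A * h2 A).
Proof. by move=> [p1 e1] [p2 e2]; exists (p1 * p2) => A; rewrite mevalM e1 e2. Qed.

Lemma polyfun_sum (I : Type) (s : seq I) (P : pred I) (F : I -> MT -> K) :
  (forall i, is_polyfun (F i)) -> is_polyfun (fun A => \sum_(i <- s | P i) F i A).
Proof.
move=> polyF; elim: s => [|x s [p e]].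
  by exists 0 => A; rewrite big_nil meval0.
have [px ex] := polyF x.
exists ((if P x then px else 0) + p) => A; rewrite big_cons mevalD -e.
by case: (P x); rewrite ?meval0 ?add0r ?ex.
Qed.

Lemma polyfun_taylor_coef a j i : is_polyfun (fun A => taylor_coef A a j i).
Proof.
have [p e] : is_polyfun (fun A => \sum_(m < d.+1) A j m * (('X + a%:P) ^+ m)`_i).
  apply: polyfun_sum => m.
  by apply: polyfunM; [apply: polyfun_entry|apply: polyfun_const].
by exists p => A; rewrite taylor_coefE e.
Qed.

Variable Q : MT -> Prop.

Definition is_ratfun_on (h : MT -> K) := exists p q : coord_poly,
  forall A, Q A -> q.@[coords A] != 0 /\ h A = p.@[coords A] / q.@[coords A].

Lemma ratfun_polyfun h : is_polyfun h -> is_ratfun_on h.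
Proof. by move=> [p e]; exists p, 1 => A _; rewrite meval1 oner_neq0 divr1. Qed.

Lemma ratfunD h1 h2 :
  is_ratfun_on h1 -> is_ratfun_on h2 -> is_ratfun_on (fun A => h1 A + h2 A).
Proof.
move=> [p1 [q1 e1]] [p2 [q2 e2]]; exists (p1 * q2 + p2 * q1), (q1 * q2) => A QA.
have [nz1 ->] := e1 A QA; have [nz2 ->] := e2 A QA.
by rewrite !mevalM mevalD !mevalM mulf_neq0 //; split=> //; field; rewrite nz1 nz2.
Qed.

Lemma ratfunM h1 h2 :
  is_ratfun_on h1 -> is_ratfun_on h2 -> is_ratfun_on (fun A => h1 A * h2 A).
Proof.
move=> [p1 [q1 e1]] [p2 [q2 e2]]; exists (p1 * p2), (q1 * q2) => A QA.
have [nz1 ->] := e1 A QA; have [nz2 ->] := e2 A QA.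
by rewrite !mevalM mulf_neq0 //; split=> //; field; rewrite nz1 nz2.
Qed.

Lemma ratfunN h : is_ratfun_on h -> is_ratfun_on (fun A => - h A).
Proof.
move=> [p [q e]]; exists (- p), q => A QA.
by have [nz ->] := e A QA; rewrite mevalN mulNr.
Qed.

Lemma ratfunV h :
  is_polyfun h -> (forall A, Q A -> h A != 0) -> is_ratfun_on (fun A => (h A)^-1).
Proof. by move=> [p e] nz_h; exists 1, p => A QA; rewrite meval1 -e div1r nz_h. Qed.

Lemma ratfun_sum (I : Type) (s : seq I) (P : pred I) (F : I -> MT -> K) :
  (forall i, is_ratfun_on (F i)) -> is_ratfun_on (fun A => \sum_(i <- s | P i) F i A).
Proof.
move=> ratF; elim: s => [|x s IH].
  by apply: ratfun_polyfun; exists 0 => A; rewrite big_nil meval0.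
have [p [q e]] : is_ratfun_on (fun A =>
    (if P x then F x A else 0) + \sum_(i <- s | P i) F i A).
  by apply: ratfunD => //; case: (P x) => //; apply/ratfun_polyfun/polyfun_const.
exists p, q => A QA; have [nz_q <-] := e A QA; split=> //.
by rewrite big_cons; case: (P x); rewrite ?add0r.
Qed.

Hypothesis charK0 : [pchar K] =i pred0.
Variable a : K.
Hypothesis Q_lc : forall A, Q A -> (oplc A).[a] != 0.

Lemma ratfun_series_sol_upto init n m :
  is_ratfun_on (fun A => series_sol_upto A a init n m).
Proof.
elim: n m => [|n IH] m /=; first exact/ratfun_polyfun/polyfun_const.
case: eqP => _; last exact: IH.
apply: ratfunD; first exact: IH.
apply/ratfunN/ratfunM.
  apply: ratfun_sum => j; apply: ratfun_sum => i; apply: ratfunM; last exact: IH.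
  apply: ratfunM; apply: ratfun_polyfun; first exact: polyfun_taylor_coef.
  exact: polyfun_const.
apply: ratfunV => [|A QA].
  have [p e] := polyfun_taylor_coef a ord_max 0.
  apply: polyfunM; last exact: polyfun_const.
  by exists p => A; rewrite -e taylor_coef_lc.
by rewrite mulf_neq0 ?Q_lc // (ffact_natf_neq0 charK0 (leq_addl n r)).
Qed.

End Rationality.

Section Jets.
Variables (K : fieldType) (r : nat).
Hypothesis charK0 : [pchar K] =i pred0.
Implicit Types tau : 'I_r.+1 -> nat -> K.
Variable g : 'I_r.+1 -> nat -> K.
Hypothesis g_init : forall j : 'I_r.+1, (j < r)%N -> forall m, (m < r)%N ->
  g j m = (j == m :> nat)%:R.

(* For [j < r] the coefficient [series_coef tau (g j) k] is triangular in
   the unknown Taylor coefficients [tau j' i]: its new unknown is [tau j k],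
   with coefficient [j`!]. *)
Lemma series_coef_diag tau tau' (j : 'I_r.+1) k : (j < r)%N ->
  (forall j' i, (i < k)%N -> tau j' i = tau' j' i) ->
  tau ord_max k = tau' ord_max k ->
  series_coef tau (g j) k = series_coef tau' (g j) k + (tau j k - tau' j k) * (j`!)%:R.
Proof.
move=> lt_jr e_low e_top.
rewrite -[LHS](subrK (series_coef tau' (g j) k)) addrC; congr (_ + _).
rewrite /series_coef -sumrB (bigD1 j) //= [X in _ + X]big1 => [|j' ne_j'j].
  rewrite addr0 -sumrB big_ord_recr /= big1 => [|i _]; last first.
    by rewrite e_low // subrr.
  by rewrite add0r subnn add0n ffactnn g_init // eqxx !mulr1 -mulrBl.
rewrite -sumrB big_ord_recr /= big1 => [|i _]; last by rewrite e_low // subrr.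
rewrite add0r subnn add0n -!mulrBl.
case: (ltnP j' r) => [lt_j'r|le_rj'].
  rewrite g_init //; case: eqP => [/val_inj e_jj'|_]; last by rewrite mulr0.
  by rewrite e_jj' eqxx in ne_j'j.
have -> : j' = ord_max by apply/val_inj => /=; have := ltn_ord j'; lia.
by rewrite e_top subrr !mul0r.
Qed.

Lemma jets_unique tau tau' N :
  (forall j : 'I_r.+1, (j < r)%N -> forall k, (k < N)%N ->
     series_coef tau (g j) k = 0) ->
  (forall j : 'I_r.+1, (j < r)%N -> forall k, (k < N)%N ->
     series_coef tau' (g j) k = 0) ->
  (forall i, (i < N)%N -> tau ord_max i = tau' ord_max i) ->
  forall j i, (i < N)%N -> tau j i = tau' j i.
Proof.
move=> tau_sol tau'_sol e_top.
suff e_upto n : (n <= N)%N -> forall j i, (i < n)%N -> tau j i = tau' j i.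
  by move=> j i lt_iN; apply: (e_upto N).
elim: n => [|n IH] le_nN j i // lt_in.
case: (ltnP i n) => [|le_ni]; first by apply: IH; lia.
have -> : i = n by lia.
case: (ltnP j r) => [lt_jr|le_rj]; last first.
  have -> : j = ord_max by apply/val_inj => /=; have := ltn_ord j; lia.
  exact: e_top.
have := tau_sol j lt_jr n le_nN; rewrite (@series_coef_diag _ tau') //; last first.
- exact: e_top.
- by move=> j' i' lt_i'n; apply: IH => //; lia.
rewrite tau'_sol // add0r => /eqP; rewrite mulf_eq0 (negbTE (fact_natf_neq0 charK0 _)).
by rewrite orbF subr_eq0 => /eqP.
Qed.

Variable tau0 : 'I_r.+1 -> nat -> K.

Fixpoint jet_sol_upto n : 'I_r.+1 -> nat -> K :=
  match n with
  | 0 => tau0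
  | n'.+1 => let tau := jet_sol_upto n' in
      fun j i => if (j < r)%N && (i == n') then
                   tau j i - series_coef tau (g j) n' / (j`!)%:R
                 else tau j i
  end.

Definition jet_sol j i := jet_sol_upto i.+1 j i.

Lemma jet_sol_upto_stable n n' j i : (n <= n')%N -> (i < n)%N ->
  jet_sol_upto n' j i = jet_sol_upto n j i.
Proof.
move=> /subnK <- lt_in; elim: (n' - n)%N => //= k ->.
by case: ifP => // /andP[_ /eqP]; lia.
Qed.

Lemma jet_sol_top i : jet_sol ord_max i = tau0 ord_max i.
Proof. by rewrite /jet_sol; elim: i.+1 => //= n ->; rewrite ltnn. Qed.

Lemma jet_sol_upto_step (j : 'I_r.+1) k : (j < r)%N ->
  series_coef (jet_sol_upto k.+1) (g j) k = 0.
Proof.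
move=> lt_jr; rewrite (@series_coef_diag _ (jet_sol_upto k)) //.
- rewrite /= lt_jr eqxx /= addrAC subrr add0r mulNr -mulrA mulVf ?mulr1 ?subrr //.
  exact: fact_natf_neq0.
- by move=> j' i lt_ik /=; rewrite ifN //; apply/negP => /andP[_ /eqP]; lia.
- by rewrite /= ltnn.
Qed.

Lemma jet_solE k j i : (i <= k)%N -> jet_sol j i = jet_sol_upto k.+1 j i.
Proof. by move=> le_ik; rewrite /jet_sol (@jet_sol_upto_stable i.+1 k.+1). Qed.

Lemma jet_solP (j : 'I_r.+1) k : (j < r)%N -> series_coef jet_sol (g j) k = 0.
Proof.
move=> lt_jr; rewrite (@series_coef_diag _ (jet_sol_upto k.+1)) //.
- by rewrite (@jet_solE k) // subrr mul0r addr0 jet_sol_upto_step.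
- by move=> j' i lt_ik; rewrite (@jet_solE k) // ltnW.
Qed.

End Jets.

Section Fiber.
Variable K : fieldType.
Hypothesis charK0 : [pchar K] =i pred0.
Variables (rL rP dL : nat) (alpha : 'I_rP -> K).
Hypothesis alpha_inj : injective alpha.
Hypothesis rP_gt1 : (1 < rP)%N.
Local Notation r := rL.
Local Notation d := dL.
Local Notation d1 := (rL * rP)%N.
Local Notation N := (rL * rP - rL + 1)%N.
Hypothesis dL_large : (N * rP <= dL)%N.
Local Notation MT := 'M[K]_(r.+1, d.+1).

Lemma r_le_d1 : (r <= d1)%N.
Proof. by rewrite leq_pmulr //; lia. Qed.

Lemma N_add_r : (N + r = d1.+1)%N.
Proof. by have := r_le_d1; lia. Qed.

Definition inV (A : MT) := forall i, ~~ root (oplc A) (alpha i).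

Variable M : 'I_rP -> 'M[K]_(r, d1.+1).
Hypothesis M_fund : forall i, Fspace (M i).

Definition row_series i (j : 'I_r.+1) (m : nat) : K :=
  if insub (val j) is Some a then (if (m <= d1)%N then M i a (inord m) else 0)
  else 0.

Lemma row_series_widen i (a : 'I_r) m : (m <= d1)%N ->
  row_series i (widen_ord (leqnSn r) a) m = M i a (inord m).
Proof. by move=> le_m; rewrite /row_series /= valK le_m. Qed.

Lemma row_series_init i (j : 'I_r.+1) : (j < r)%N -> forall m, (m < r)%N ->
  row_series i j m = (j == m :> nat)%:R.
Proof.
move=> lt_jr m lt_mr; have le_m : (m <= d1)%N by have := r_le_d1; lia.
have -> : j = widen_ord (leqnSn r) (Ordinal lt_jr) by exact: val_inj.
by rewrite row_series_widen // M_fund inordK //; lia.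
Qed.

Definition in_fiber_space (A : MT) := forall i (j : 'I_r.+1), (j < r)%N ->
  forall k, (k < N)%N -> ser_apply A (alpha i) (row_series i j) k = 0.

Lemma fiber_spaceP A : inV A ->
  (forall i, fund_mat A (alpha i) d1 = M i) <-> in_fiber_space A.
Proof.
move=> VA; split=> [phiA i j lt_jr k lt_kN | W_A i].
  have [_ fund_rows] := fund_matP charK0 (VA i) d1.
  have [f [f_sol fE]] := fund_rows (Ordinal lt_jr).
  rewrite -(f_sol k); apply: ser_apply_ext => m le_m.
  have le_m_d1 : (m <= d1)%N by have := N_add_r; lia.
  have -> : j = widen_ord (leqnSn r) (Ordinal lt_jr) by exact: val_inj.
  by rewrite row_series_widen // -phiA fE inordK.
apply/matrixP => a b.
rewrite (fund_mat_series_sol charK0 (VA i)); last by have := r_le_d1; lia.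
have -> : M i a b = row_series i (widen_ord (leqnSn r) a) b.
  by rewrite row_series_widen ?inord_val // -ltnS ltn_ord.
apply: (@ps_solution_unique _ _ _ charK0 _ _ (VA i) _ _ N).
- by move=> k _; exact: (@series_solP _ _ _ charK0 A (alpha i) (VA i) _ k).
- by move=> k lt_kN; exact: (W_A i (widen_ord (leqnSn r) a) (ltn_ord a) k lt_kN).
- move=> m lt_mr; rewrite series_sol_init //.
  by rewrite (row_series_init i (j := widen_ord (leqnSn r) a) (ltn_ord a)).
- by rewrite N_add_r.
Qed.

Lemma fiber_space_sum (I : finType) (c : I -> K) (F : I -> MT) :
  (forall t, in_fiber_space (F t)) -> in_fiber_space (\sum_t c t *: F t).
Proof.
move=> W_F; elim/big_rec: _ => [|t A _ W_A] i j lt_jr k lt_kN.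
  exact: ser_apply0.
by rewrite ser_apply_lin W_F // W_A // mulr0 addr0.
Qed.

Definition free_coef (j : 'I_r.+1) (m : 'I_d.+1) : bool :=
  (j == ord_max) || (N * rP <= m)%N.

Lemma fiber_space_extend (B : MT) :
  exists2 A : MT, in_fiber_space A & forall j m, free_coef j m -> A j m = B j m.
Proof.
pose tau i := jet_sol (row_series i) (taylor_coef B (alpha i)).
pose high (j : 'I_r.+1) : {poly K} :=
  \poly_(m < d.+1) (if (N * rP <= m)%N then B j (inord m) else 0).
have [low size_low jets_low] := fin_all_exists2 (fun j => hermite_interpolation N
  (fun i k => tau i j k - (high j \Po ('X + (alpha i)%:P))`_k) alpha_inj).
pose c j := if j == ord_max then opcoef B ord_max else low j + high j.
have size_c j : (size (c j) <= d.+1)%N.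
  rewrite /c; case: ifP => _; first exact: size_poly.
  rewrite (leq_trans (size_polyD _ _)) // geq_max size_poly andbT.
  by rewrite (leq_trans (size_low j)) //; lia.
pose A : MT := \matrix_(j, m) (c j)`_m.
have opA j : opcoef A j = c j.
  apply/polyP => m; rewrite coef_poly; case: ltnP => [lt_m|le_m].
    by rewrite mxE inordK.
  by apply/esym; move/leq_sizeP: (size_c j); apply.
exists A => [i j lt_jr k lt_kN | j m].
  rewrite ser_applyE (@series_coef_ext _ _ _ (tau i)).
    exact: (jet_solP charK0 (row_series_init i)).
  move=> j' i' le_i'k; rewrite /taylor_coef opA /c; case: eqP => [->|_].
    by rewrite /tau jet_sol_top.
  by rewrite comp_polyD coefD jets_low ?subrK //; lia.
rewrite mxE /c /free_coef; case: eqP => [->|_] /= high_m; first by rewrite coef_opcoef.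
rewrite coefD; have -> : (low j)`_m = 0 by apply: (leq_sizeP _ _ (size_low j)); lia.
by rewrite add0r coef_poly ltn_ord high_m inord_val.
Qed.

Lemma fiber_space_free_coef_inj (A A' : MT) :
  in_fiber_space A -> in_fiber_space A' ->
  (forall j m, free_coef j m -> A j m = A' j m) -> A = A'.
Proof.
move=> W_A W_A' e_free.
have e_lc : opcoef A ord_max = opcoef A' ord_max.
  by apply: eq_poly => m lt_m; rewrite e_free // /free_coef eqxx.
have e_jets i j k : (k < N)%N ->
    taylor_coef A (alpha i) j k = taylor_coef A' (alpha i) j k.
  apply: (jets_unique charK0 (row_series_init i)).
  - by move=> j' lt_j'r k' lt_k'N; rewrite -ser_applyE W_A.
  - by move=> j' lt_j'r k' lt_k'N; rewrite -ser_applyE W_A'.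
  - by move=> k' _; rewrite /taylor_coef e_lc.
suff e_rows j : opcoef A j = opcoef A' j.
  by apply/matrixP => j m; rewrite -!coef_opcoef e_rows.
have [->|ne_j] := eqVneq j ord_max; first exact: e_lc.
apply/eqP; rewrite -subr_eq0; apply/eqP.
apply: (@hermite_uniq _ [seq alpha i | i <- enum 'I_rP] N).
- by rewrite map_inj_uniq ?enum_uniq.
- rewrite size_map size_enum_ord; apply/leq_sizeP => m le_m.
  rewrite coefB /opcoef !coef_poly; case: ifP => lt_m; last by rewrite subrr.
  by rewrite e_free ?subrr // /free_coef (negbTE ne_j) inordK.
- move=> _ /mapP[i _ ->] k lt_kN; rewrite comp_polyB coefB.
  by apply/eqP; rewrite subr_eq0; apply/eqP; apply: e_jets.
Qed.

Lemma fiber_nonempty : exists2 A, inV A & in_fiber_space A.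
Proof.
pose B : MT := \matrix_(j, m) ((j == ord_max) && (m == ord0))%:R.
have [A W_A e_free] := fiber_space_extend B.
exists A => // i; rewrite /root horner_oplc (bigD1 ord0) //= big1 => [|m ne_m0].
  by rewrite e_free ?/free_coef ?eqxx // mxE !eqxx expr0 mulr1 addr0 oner_neq0.
by rewrite e_free ?/free_coef ?eqxx // mxE eqxx (negbTE ne_m0) mul0r.
Qed.

Definition free_pairs : pred ('I_r.+1 * 'I_d.+1) := [pred jm | free_coef jm.1 jm.2].

Definition fiber_dim := #|free_pairs|.

Lemma free_pair_lc m : ((ord_max : 'I_r.+1), m) \in free_pairs.
Proof. by rewrite inE /free_coef eqxx. Qed.

Local Notation free_rank := (enum_rank_in (free_pair_lc ord0)).

Definition free_val (A : MT) (t : 'I_fiber_dim) : K := A (enum_val t).1 (enum_val t).2.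

Definition free_index (t : 'I_fiber_dim) : 'I_(r.+1 * d.+1) :=
  mxvec_index (enum_val t).1 (enum_val t).2.

Lemma coords_free_index A t : coords A (free_index t) = free_val A t.
Proof. exact: mxvecE. Qed.

Lemma free_index_inj : injective free_index.
Proof.
move=> t t' /cast_ord_inj/enum_rank_inj.
by rewrite -!surjective_pairing => /enum_val_inj.
Qed.

Lemma free_val_sum (I : finType) (c : I -> K) (F : I -> MT) t :
  free_val (\sum_s c s *: F s) t = \sum_s c s * free_val (F s) t.
Proof. by rewrite /free_val summxE; apply: eq_bigr => s _; rewrite mxE. Qed.

Lemma fiber_space_basis : exists basis : 'I_fiber_dim -> MT,
  forall t, in_fiber_space (basis t) /\ forall t', free_val (basis t) t' = (t' == t)%:R.
Proof.
suff basis_t t : exists A : MT,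
    in_fiber_space A /\ forall t', free_val A t' = (t' == t)%:R.
  by have [basis basisP] := fin_all_exists basis_t; exists basis.
pose B : MT := \matrix_(j, m)
  (if (j, m) \in free_pairs then (free_rank (j, m) == t)%:R else 0).
have [A W_A e_free] := fiber_space_extend B.
exists A; split => // t'; have t'_free := enum_valP t'.
rewrite /free_val e_free; last exact: t'_free.
by rewrite mxE -surjective_pairing t'_free enum_valK_in.
Qed.

Definition fiber_coords (v : 'I_(r.+1 * d.+1) -> K) : Prop :=
  exists A : MT, v = coords A /\ inV A /\ forall i, fund_mat A (alpha i) d1 = M i.

Definition lc_at_poly i : {mpoly K[fiber_dim]} :=
  \sum_(m < d.+1) alpha i ^+ m *: 'X_(free_rank (ord_max, m)).

Lemma lc_at_poly_lc_point i :
  (lc_at_poly i).@[fun t => (t == free_rank (ord_max, ord0))%:R] = 1.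
Proof.
rewrite /lc_at_poly (big_morph _ (mevalD _) (meval0 _)) (bigD1 ord0) //=.
rewrite mevalZ mevalXU eqxx expr0 mulr1 big1 ?addr0 // => m ne_m0.
rewrite mevalZ mevalXU; case: eqP => [e_rank|]; last by rewrite mulr0.
have := congr1 enum_val e_rank; rewrite !enum_rankK_in ?free_pair_lc //.
by case=> e_m; rewrite e_m eqxx in ne_m0.
Qed.

Lemma prod_lc_at_poly_neq0 : \prod_i lc_at_poly i != 0.
Proof.
apply/eqP => /(congr1 (meval (fun t => (t == free_rank (ord_max, ord0))%:R))).
rewrite meval0 (big_morph _ (mevalM _) (meval1 _)) big1 => [/eqP|i _].
  by rewrite oner_eq0.
exact: lc_at_poly_lc_point.
Qed.

Section Basis.
Variable basis : 'I_fiber_dim -> MT.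
Hypothesis basisP : forall t,
  in_fiber_space (basis t) /\ forall t', free_val (basis t) t' = (t' == t)%:R.

Lemma free_val_span (c : 'I_fiber_dim -> K) t :
  free_val (\sum_s c s *: basis s) t = c t.
Proof.
rewrite free_val_sum (bigD1 t) //= (basisP t).2 eqxx mulr1 big1 ?addr0 // => s ne_st.
by rewrite (basisP s).2 eq_sym (negbTE ne_st) mulr0.
Qed.

Lemma fiber_space_span A : in_fiber_space A -> A = \sum_t free_val A t *: basis t.
Proof.
move=> W_A; apply: fiber_space_free_coef_inj => // [|j m free_jm].
  by apply: fiber_space_sum => t; case: (basisP t).
have jm_free : (j, m) \in free_pairs by rewrite inE.
have := free_val_span (free_val A) (free_rank (j, m)).
by rewrite /free_val enum_rankK_in // => ->.
Qed.

Lemma lc_span c i :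
  (oplc (\sum_t c t *: basis t)).[alpha i] = (lc_at_poly i).@[c].
Proof.
rewrite horner_oplc /lc_at_poly (big_morph _ (mevalD c) (meval0 c)).
apply: eq_bigr => m _; rewrite mevalZ mevalXU mulrC; congr (_ * _).
have := free_val_span c (free_rank (ord_max, m)).
by rewrite /free_val enum_rankK_in ?free_pair_lc.
Qed.

Lemma span_fiber_coords c : (\prod_i lc_at_poly i).@[c] != 0 ->
  fiber_coords (coords (\sum_t c t *: basis t)).
Proof.
rewrite (big_morph _ (mevalM c) (meval1 c)) prodf_seq_neq0 => /allP nz_lc.
have VA : inV (\sum_t c t *: basis t).
  by move=> i; rewrite /root lc_span; apply: nz_lc; rewrite mem_index_enum.
exists (\sum_t c t *: basis t); split=> //; split=> //.
apply/(fiber_spaceP VA); apply: fiber_space_sum => t; exact: (basisP t).1.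
Qed.

(* If p vanishes on the fiber, then p times the product of the leading
   coefficients vanishes on the whole free coordinate space. *)
Lemma fiber_free_coords_indep : coord_indep fiber_coords free_index.
Proof.
move=> p p0; set lcp := \prod_i lc_at_poly i.
suff /eqP : p * lcp = 0 by rewrite mulf_eq0 (negbTE prod_lc_at_poly_neq0) orbF => /eqP.
apply: (vanishing_mpoly_eq0 charK0) => c; rewrite mevalM.
have [->|nz_lcp] := eqVneq lcp.@[c] 0; first by rewrite mulr0.
have := p0 _ (span_fiber_coords nz_lcp).
rewrite (@meval_eq _ _ _ c) => [->|t]; first by rewrite mul0r.
by rewrite coords_free_index free_val_span.
Qed.

(* The fiber lies in the span of [basis], so more than [fiber_dim]
   coordinates satisfy a nontrivial linear relation on it. *)
Lemma fiber_coords_dim_le e (s : 'I_e -> 'I_(r.+1 * d.+1)) :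
  coord_indep fiber_coords s -> (e <= fiber_dim)%N.
Proof.
move=> s_indep; rewrite leqNgt; apply/negP => lt_dim_e.
pose X : 'M[K]_(e, fiber_dim) := \matrix_(u, t) coords (basis t) (s u).
have [v nz_v vX0] := wide_mx_left_kernel X lt_dim_e.
move/eqP: nz_v; apply; apply: linear_mpoly_eq0; apply: s_indep => _ [A [-> [VA phiA]]].
rewrite (fiber_space_span ((fiber_spaceP VA).1 phiA)).
rewrite (big_morph _ (mevalD _) (meval0 _)).
under eq_bigr => u _ do rewrite mevalZ mevalXU coords_sum big_distrr.
rewrite exchange_big big1 //= => t _.
transitivity (free_val A t * (v *m X) 0 t); last by rewrite vX0 mxE mulr0.
by rewrite mxE big_distrr; apply: eq_bigr => u _; rewrite mxE mulrCA.
Qed.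

End Basis.

Lemma fiber_has_dim : has_dim fiber_coords fiber_dim.
Proof.
have [basis basisP] := fiber_space_basis.
split=> [|e s _]; last exact: (@fiber_coords_dim_le basis basisP e s).
by exists free_index; split; [exact: free_index_inj|exact: fiber_free_coords_indep].
Qed.

End Fiber.

Theorem proposition19 (C : fieldType) (K : closedFieldType)
  (iota : {rmorphism C -> K}) (P : {poly {poly C}}) (rP rL dL : nat)
  (alpha : 'I_rP -> K) :
  [pchar C] =i pred0 ->
  (forall z : K, exists2 p : {poly C}, p != 0 & root (map_poly iota p) z) ->
  (1 < rP)%N ->
  size P = rP.+1 ->
  size (P_at0 P) = rP.+1 ->
  squarefree (P_at0 P) ->
  injective alpha ->
  (forall z : K, root (map_poly iota (P_at0 P)) z <-> exists i, alpha i = z) ->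
  ((rL * rP - rL + 1) * rP <= dL)%N ->
  let inV := fun A : 'M[K]_(rL.+1, dL.+1) =>
               forall i : 'I_rP, ~~ root (oplc A) (alpha i) in
  let phi := fun (A : 'M[K]_(rL.+1, dL.+1)) (i : 'I_rP) =>
               fund_mat A (alpha i) (rL * rP) in
  (* phi maps V into F(rL, rL rP)^rP *)
  (forall A, inV A -> forall i, Fspace (phi A i))
  (* phi is a regular map of algebraic sets *)
  /\ (forall (i : 'I_rP) (a : 'I_rL) (b : 'I_(rL * rP).+1),
        exists p q : {mpoly K[rL.+1 * dL.+1]},
          forall A, inV A ->
            q.@[coords A] != 0 /\ phi A i a b = p.@[coords A] / q.@[coords A])
  (* phi is surjective *)
  /\ (forall M : 'I_rP -> 'M[K]_(rL, (rL * rP).+1),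
        (forall i, Fspace (M i)) ->
        exists A, inV A /\ forall i, phi A i = M i)
  (* all fibers have the same dimension *)
  /\ (exists dim : nat,
        forall M : 'I_rP -> 'M[K]_(rL, (rL * rP).+1),
          (forall i, Fspace (M i)) ->
          has_dim (fun v => exists A, v = coords A /\ inV A
                                      /\ forall i, phi A i = M i) dim).
Proof.
move=> charC _ rP_gt1 _ _ _ alpha_inj _ dL_large inV phi; rewrite {}/phi {}/inV.
have charK0 : [pchar K] =i pred0 by move=> p; rewrite (fmorph_pchar iota) charC.
split; [|split; [|split]].
- by move=> A VA i; have [] := fund_matP charK0 (VA i) (rL * rP).
- move=> i a b.
  have [p [q pq]] := @ratfun_series_sol_upto K rL dL (inV alpha) charK0 _
    (fun A VA => VA i) (fun m => (a == m :> nat)%:R) b.+1 b.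
  exists p, q => A VA; rewrite (fund_mat_series_sol charK0 (VA i)).
    exact: pq.
  exact/leqW/r_le_d1.
- move=> M M_fund.
  have [A VA W_A] := fiber_nonempty charK0 alpha_inj rP_gt1 dL_large M_fund.
  by exists A; split=> //; apply/(fiber_spaceP charK0 rP_gt1 dL_large M_fund VA).
exists (fiber_dim rL rP dL) => M M_fund.
exact (fiber_has_dim charK0 alpha_inj rP_gt1 dL_large M_fund).
Qed.
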